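(* Let $\mathcal{E}_{tr}$ be a finite set of training environments, $\mathcal{H}_\Phi$ a class of representations $\Phi:\mathcal{X}\to\mathcal{Z}$ and $\mathcal{H}_w$ a class of classifiers $w:\mathcal{Z}\to\mathbb{R}^k$ satisfying affine closure (for all $w_1,w_2\in\mathcal{H}_w$ and $c\in\mathbb{R}$, the pointwise sum $w_1+w_2$ and pointwise multiple $cw$ lie in $\mathcal{H}_w$). Then $\hat{\mathcal{S}}^{\mathsf{IV}}=\hat{\mathcal{S}}^{\mathsf{EIRM}}$.
   Context: For each environment $e\in\mathcal{E}_{tr}$ there is a distribution of $(X^e,Y^e)$ with $X^e\in\mathcal{X}\subseteq\mathbb{R}^n$, $Y^e\in\mathcal{Y}\subseteq\mathbb{R}^k$; for a loss $\ell$, $R^e(f)=\mathbb{E}[\ell(f(X^e),Y^e)]$. $\mathcal{Z}\subseteq\mathbb{R}^d$. $\mathcal{S}^{\mathsf{IV}}$ is the set of $(\Phi,w)\in\mathcal{H}_\Phi\times\mathcal{H}_w$ with $R^e(w\circ\Phi)\le R^e(\bar w\circ\Phi)$ for all $\bar w\in\mathcal{H}_w$ and all $e\in\mathcal{E}_{tr}$; the set of invariant predictors is $\hat{\mathcal{S}}^{\mathsf{IV}}=\{w\circ\Phi:(\Phi,w)\in\mathcal{S}^{\mathsf{IV}}\}$. Ensemble game: given $\Phi\in\mathcal{H}_\Phi$, each environment $e$ chooses $w^e\in\mathcal{H}_w$ with utility $u_e=-R^e(w^{av}\circ\Phi)$, $w^{av}=\frac{1}{|\mathcal{E}_{tr}|}\sum_q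 w^q$. $\mathcal{S}^{\mathsf{EIRM}}$ is the set of $(\Phi,\{w^q\}_{q\in\mathcal{E}_{tr}})$ with $\Phi\in\mathcal{H}_\Phi$ and $\{w^q\}$ a pure Nash equilibrium of this game given $\Phi$ (no player can strictly increase its utility by unilaterally changing its $w^e$ within $\mathcal{H}_w$). $\hat{\mathcal{S}}^{\mathsf{EIRM}}=\{(\frac{1}{|\mathcal{E}_{tr}|}\sum_q w^q)\circ\Phi : (\Phi,\{w^q\})\in\mathcal{S}^{\mathsf{EIRM}}\}$. *)

From HB Require Import structures.
From mathcomp Require Import all_boot all_order all_algebra.
From mathcomp Require Import all_classical all_reals all_analysis.
Set Implicit Arguments. Unset Strict Implicit. Unset Printing Implicit Defensive.
Import Order.TTheory GRing.Theory Num.Theory.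
Local Open Scope classical_set_scope.
Local Open Scope ring_scope.

(* For each environment e, the pair
   (X^e, Y^e) is given by random variables Xe e : Omega -> R^n and
   Ye e : Omega -> R^k on a probability space (Omega, P e). *)

Definition risk (R : realType) (d : measure_display) (Omega : measurableType d)
  (E : finType) (n k : nat) (P : E -> probability Omega R)
  (Xe : E -> Omega -> 'rV[R]_n) (Ye : E -> Omega -> 'rV[R]_k)
  (loss : 'rV[R]_k -> 'rV[R]_k -> R) (e : E) (f : 'rV[R]_n -> 'rV[R]_k) : \bar R :=
  (\int[P e]_om (loss (f (Xe e om)) (Ye e om))%:E)%E.

Definition affine_closed (R : realType) (dz k : nat)
  (Hw : set ('rV[R]_dz -> 'rV[R]_k)) : Prop :=
  (forall w1 w2, Hw w1 -> Hw w2 -> Hw (fun z => w1 z + w2 z)) /\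
  (forall (c : R) w, Hw w -> Hw (fun z => c *: w z)).

Definition wavg (R : realType) (E : finType) (dz k : nat)
  (ws : E -> 'rV[R]_dz -> 'rV[R]_k) : 'rV[R]_dz -> 'rV[R]_k :=
  fun z => (#|E|%:R)^-1 *: \sum_(q : E) ws q z.

Definition deviate (R : realType) (E : finType) (dz k : nat)
  (ws : E -> 'rV[R]_dz -> 'rV[R]_k) (e : E) (w' : 'rV[R]_dz -> 'rV[R]_k) :
  E -> 'rV[R]_dz -> 'rV[R]_k :=
  fun q => if q == e then w' else ws q.

Definition S_IV_hat (R : realType) (d : measure_display) (Omega : measurableType d)
  (E : finType) (n dz k : nat) (P : E -> probability Omega R)
  (Xe : E -> Omega -> 'rV[R]_n) (Ye : E -> Omega -> 'rV[R]_k)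
  (loss : 'rV[R]_k -> 'rV[R]_k -> R)
  (HPhi : set ('rV[R]_n -> 'rV[R]_dz)) (Hw : set ('rV[R]_dz -> 'rV[R]_k))
  : set ('rV[R]_n -> 'rV[R]_k) :=
  [set f | exists Phi w, [/\ HPhi Phi, Hw w,
     (forall (e : E) wbar, Hw wbar ->
        (risk P Xe Ye loss e (w \o Phi) <= risk P Xe Ye loss e (wbar \o Phi))%E)
     & f = w \o Phi]].

Definition utility (R : realType) (d : measure_display) (Omega : measurableType d)
  (E : finType) (n dz k : nat) (P : E -> probability Omega R)
  (Xe : E -> Omega -> 'rV[R]_n) (Ye : E -> Omega -> 'rV[R]_k)
  (loss : 'rV[R]_k -> 'rV[R]_k -> R) (Phi : 'rV[R]_n -> 'rV[R]_dz)
  (e : E) (ws : E -> 'rV[R]_dz -> 'rV[R]_k) : \bar R :=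
  (- risk P Xe Ye loss e (wavg ws \o Phi))%E.

Definition pure_nash (R : realType) (d : measure_display) (Omega : measurableType d)
  (E : finType) (n dz k : nat) (P : E -> probability Omega R)
  (Xe : E -> Omega -> 'rV[R]_n) (Ye : E -> Omega -> 'rV[R]_k)
  (loss : 'rV[R]_k -> 'rV[R]_k -> R) (Hw : set ('rV[R]_dz -> 'rV[R]_k))
  (Phi : 'rV[R]_n -> 'rV[R]_dz) (ws : E -> 'rV[R]_dz -> 'rV[R]_k) : Prop :=
  (forall q, Hw (ws q)) /\
  forall (e : E) w', Hw w' ->
    ~ (utility P Xe Ye loss Phi e ws < utility P Xe Ye loss Phi e (deviate ws e w'))%E.

Definition S_EIRM_hat (R : realType) (d : measure_display) (Omega : measurableType d)
  (E : finType) (n dz k : nat) (P : E -> probability Omega R)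
  (Xe : E -> Omega -> 'rV[R]_n) (Ye : E -> Omega -> 'rV[R]_k)
  (loss : 'rV[R]_k -> 'rV[R]_k -> R)
  (HPhi : set ('rV[R]_n -> 'rV[R]_dz)) (Hw : set ('rV[R]_dz -> 'rV[R]_k))
  : set ('rV[R]_n -> 'rV[R]_k) :=
  [set f | exists Phi ws, [/\ HPhi Phi, pure_nash P Xe Ye loss Hw Phi ws
     & f = wavg ws \o Phi]].

From HB Require Import structures.
From mathcomp Require Import all_boot all_order all_algebra.
From mathcomp Require Import all_classical all_reals all_analysis.
Set Implicit Arguments. Unset Strict Implicit. Unset Printing Implicit Defensive.
Import Order.TTheory GRing.Theory Num.Theory.
Local Open Scope classical_set_scope.
Local Open Scope ring_scope.

(* Under affine closure a single player e can move the average classifier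
   w^av to any wbar in H_w, by playing w^e + |E| (wbar - w^av), which again
   lies in H_w.  Hence the Nash condition of player e says exactly that w^av
   minimises the risk of environment e over H_w: the Nash equilibria are the
   families whose average is an invariant classifier.  Conversely, an
   invariant w is the average of the constant family w. *)

Section Averaging.
Variables (R : realType) (E : finType) (dz k : nat).
Implicit Types (w wbar : 'rV[R]_dz -> 'rV[R]_k) (ws : E -> 'rV[R]_dz -> 'rV[R]_k).

Lemma wavgE ws : wavg ws = #|E|%:R^-1 *: \sum_q ws q.
Proof. by rewrite fct_sumE. Qed.

Lemma wavg_const w : (0 < #|E|)%N -> wavg (fun _ : E => w) = w.
Proof.
move=> E_gt0; rewrite wavgE sumr_const -[w *+ _]scaler_nat scalerA.
by rewrite mulVf ?scale1r // pnatr_eq0 -lt0n.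
Qed.

Lemma wavg_deviate ws e w :
  wavg (deviate ws e w) = wavg ws + #|E|%:R^-1 *: (w - ws e).
Proof.
rewrite !wavgE -scalerDr (bigD1 e) //= [\sum_q ws q](bigD1 e) //= /deviate eqxx.
rewrite (eq_bigr ws) => [|q /negbTE -> //].
by congr (_ *: _); rewrite addrAC subrKC.
Qed.

Definition deviation_to ws e wbar := ws e + #|E|%:R *: (wbar - wavg ws).

Lemma wavg_deviation_to ws e wbar :
  (0 < #|E|)%N -> wavg (deviate ws e (deviation_to ws e wbar)) = wbar.
Proof.
move=> E_gt0; rewrite wavg_deviate /deviation_to [ws e + _]addrC addrK scalerA.
by rewrite mulVf ?scale1r ?subrKC // pnatr_eq0 -lt0n.
Qed.

End Averaging.

Section AffineClosed.
Variables (R : realType) (dz k : nat) (Hw : set ('rV[R]_dz -> 'rV[R]_k)).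
Hypothesis Hw_affine : affine_closed Hw.

Lemma affine_closedD w1 w2 : Hw w1 -> Hw w2 -> Hw (w1 + w2).
Proof. by case: Hw_affine => + _; apply. Qed.

Lemma affine_closedZ c w : Hw w -> Hw (c *: w).
Proof. by case: Hw_affine => _; apply. Qed.

Lemma affine_closedB w1 w2 : Hw w1 -> Hw w2 -> Hw (w1 - w2).
Proof.
by move=> Hw1 Hw2; rewrite -scaleN1r; apply/affine_closedD/affine_closedZ.
Qed.

Lemma affine_closed_sum (I : finType) (F : I -> 'rV[R]_dz -> 'rV[R]_k) :
  (0 < #|I|)%N -> (forall i, Hw (F i)) -> Hw (\sum_i F i).
Proof.
case/card_gt0P=> i0 _ HF; apply: big_ind => //; last exact: affine_closedD.
by rewrite -(subrr (F i0)); apply: affine_closedB.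
Qed.

Lemma affine_closed_wavg (E : finType) (ws : E -> 'rV[R]_dz -> 'rV[R]_k) :
  (0 < #|E|)%N -> (forall q, Hw (ws q)) -> Hw (wavg ws).
Proof. by move=> E_gt0 Hws; rewrite wavgE; apply/affine_closedZ/affine_closed_sum. Qed.

End AffineClosed.

Section NashEquilibria.
Variables (R : realType) (d : measure_display) (Omega : measurableType d)
  (E : finType) (n dz k : nat) (P : E -> probability Omega R)
  (Xe : E -> Omega -> 'rV[R]_n) (Ye : E -> Omega -> 'rV[R]_k)
  (loss : 'rV[R]_k -> 'rV[R]_k -> R) (Hw : set ('rV[R]_dz -> 'rV[R]_k)).
Hypotheses (E_gt0 : (0 < #|E|)%N) (Hw_affine : affine_closed Hw).

Local Notation risk := (risk P Xe Ye loss).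

Definition risk_optimal (Phi : 'rV[R]_n -> 'rV[R]_dz) (w : 'rV[R]_dz -> 'rV[R]_k) :=
  forall e wbar, Hw wbar -> (risk e (w \o Phi) <= risk e (wbar \o Phi))%E.

Lemma pure_nashP Phi ws :
  pure_nash P Xe Ye loss Hw Phi ws <->
  (forall q, Hw (ws q)) /\ risk_optimal Phi (wavg ws).
Proof.
have no_gain e w : ~ (utility P Xe Ye loss Phi e ws <
                      utility P Xe Ye loss Phi e (deviate ws e w))%E <->
    (risk e (wavg ws \o Phi) <= risk e (wavg (deviate ws e w) \o Phi))%E.
  by rewrite /utility lteN2 leNgt; split=> /negP.
split=> -[Hws ws_opt]; split=> // e w Hw_w.
- rewrite -(wavg_deviation_to ws e w E_gt0); apply/no_gain/ws_opt.
  apply/(affine_closedD Hw_affine)/(affine_closedZ Hw_affine) => //.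
  exact/(affine_closedB Hw_affine)/(affine_closed_wavg Hw_affine).
- apply/no_gain/ws_opt/(affine_closed_wavg Hw_affine) => // q.
  by rewrite /deviate; case: (q == e).
Qed.

End NashEquilibria.

Theorem corollary1 (R : realType) (d : measure_display) (Omega : measurableType d)
  (E : finType) (n dz k : nat) (P : E -> probability Omega R)
  (Xe : E -> Omega -> 'rV[R]_n) (Ye : E -> Omega -> 'rV[R]_k)
  (loss : 'rV[R]_k -> 'rV[R]_k -> R)
  (HPhi : set ('rV[R]_n -> 'rV[R]_dz)) (Hw : set ('rV[R]_dz -> 'rV[R]_k)) :
  (0 < #|E|)%N ->
  affine_closed Hw ->
  S_IV_hat P Xe Ye loss HPhi Hw = S_EIRM_hat P Xe Ye loss HPhi Hw.
Proof.
move=> E_gt0 Hw_affine; apply/seteqP; split=> f.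
- case=> Phi [w [HPhi_Phi Hw_w w_opt ->]].
  exists Phi, (fun=> w); split=> //; last by rewrite wavg_const.
  by apply/(pure_nashP P Xe Ye loss E_gt0 Hw_affine); rewrite wavg_const.
- case=> Phi [ws [HPhi_Phi /(pure_nashP P Xe Ye loss E_gt0 Hw_affine) [Hws ws_opt] ->]].
  by exists Phi, (wavg ws); split=> //; apply: affine_closed_wavg.
Qed.
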